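(* Let $\mathrm{Sol}$ be $\mathbb{R}^3$ with Riemannian metric $e^{-2z}dx^2+e^{2z}dy^2+dz^2$ and let $\mathcal{S}_r$ be the metric sphere of radius $r$ centered at the origin. Then $N_{X,r}=N_{Y,r}=2$.
   Context: $\eta_X(x,y,z)=(0,y,z)$ and $\eta_Y(x,y,z)=(x,0,z)$ are the projections onto the planes $\{x=0\}$ and $\{y=0\}$. For $W\in\{X,Y\}$, $N_{W,r}$ is the smallest integer $N$ such that the restriction of $\eta_W$ to $\mathcal{S}_r$ is at most $N$-to-$1$. *)

From Stdlib Require Import Reals List.
From Coquelicot Require Import Coquelicot.
Open Scope R_scope.

Definition pt := (R * R * R)%type.
Definition px (p : pt) : R := fst (fst p).
Definition py (p : pt) : R := snd (fst p).
Definition pz (p : pt) : R := snd p.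
Definition origin : pt := (0, 0, 0).

(* A C^1 curve gamma = (gx, gy, gz) : [0,1] -> R^3 (components given on all
   of R, differentiable with continuous derivative). *)
Definition C1 (f : R -> R) : Prop :=
  (forall t, ex_derive f t) /\ (forall t, continuous (Derive f) t).

Record curve := mkCurve { gx : R -> R; gy : R -> R; gz : R -> R }.

Definition admissible (g : curve) (p q : pt) : Prop :=
  C1 (gx g) /\ C1 (gy g) /\ C1 (gz g) /\
  (gx g 0, gy g 0, gz g 0) = p /\ (gx g 1, gy g 1, gz g 1) = q.

Definition sol_length (g : curve) : R :=
  RInt (fun t => sqrt (exp (-2 * gz g t) * (Derive (gx g) t)^2
                       + exp (2 * gz g t) * (Derive (gy g) t)^2
                       + (Derive (gz g) t)^2)) 0 1.

Definition sol_dist (p q : pt) : Rbar :=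
  Glb_Rbar (fun l => exists g, admissible g p q /\ l = sol_length g).

Definition sphere (r : R) (p : pt) : Prop := sol_dist origin p = Finite r.

Definition etaX (p : pt) : pt := (0, py p, pz p).
Definition etaY (p : pt) : pt := (px p, 0, pz p).

Definition at_most_N_to_1 (f : pt -> pt) (S : pt -> Prop) (N : nat) : Prop :=
  forall (q : pt) (l : list pt), NoDup l ->
    (forall p, In p l -> S p /\ f p = q) -> (length l <= N)%nat.

Definition is_N (f : pt -> pt) (r : R) (N : nat) : Prop :=
  at_most_N_to_1 f (sphere r) N /\
  forall M : nat, at_most_N_to_1 f (sphere r) M -> (N <= M)%nat.

(* For fixed [(y, z)], the distance [d] from the origin is even and strictly increasing in
   [|x|]: multiplying the x-component of a curve by [c] with [|c| < 1] shortens it by a definite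
   amount, because along a near-minimizing curve of length [L] one has [z >= -L], so the
   x-part [∫ e^(-z) |x'|] of its length is at least [e^(-L) |x| > 0]. Hence a fibre of [eta_X]
   meets [S_r] in at most the two points [(±x, y, z)]. The same scaling shows that
   [s |-> d (s, 0, 0)] is continuous; it is at most [|s|] and unbounded, so [(±s, 0, 0)] lie on
   [S_r] for some [s > 0]. The isometry [(x, y, z) |-> (y, x, -z)] transfers all of this to
   [eta_Y]. *)

From Pilot Require Import Defs.
From Stdlib Require Import Reals List Lra Lia Psatz Ranalysis5 Classical.
From Coquelicot Require Import Coquelicot.
Open Scope R_scope.

(* Coquelicot states these for generic normed modules; the instances on [R -> R] let [auto]
   chain them. *)
Lemma continuous_Rconst (c t : R) : continuous (fun _ => c) t.
Proof. apply continuous_const. Qed.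

Lemma continuous_Rplus (f g : R -> R) t :
  continuous f t -> continuous g t -> continuous (fun u => f u + g u) t.
Proof. exact (continuous_plus (V := R_NormedModule) f g t). Qed.

Lemma continuous_Rmult (f g : R -> R) t :
  continuous f t -> continuous g t -> continuous (fun u => f u * g u) t.
Proof. exact (continuous_mult f g t). Qed.

Lemma continuous_Ropp (f : R -> R) t : continuous f t -> continuous (fun u => - f u) t.
Proof. exact (continuous_opp (V := R_NormedModule) f t). Qed.

Lemma continuous_Rminus (f g : R -> R) t :
  continuous f t -> continuous g t -> continuous (fun u => f u - g u) t.
Proof. intros; apply continuous_Rplus, continuous_Ropp; assumption. Qed.

Lemma continuous_Rsqr (f : R -> R) t : continuous f t -> continuous (fun u => f u ^ 2) t.
Proof.
  intros Hf; apply (continuous_ext (fun u => f u * (f u * 1))); [reflexivity|].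
  apply continuous_Rmult; [|apply continuous_Rmult]; auto using continuous_Rconst.
Qed.

Lemma continuous_Rexp (f : R -> R) t : continuous f t -> continuous (fun u => exp (f u)) t.
Proof. exact (continuous_exp_comp f t). Qed.

Lemma continuous_Rabs (f : R -> R) t : continuous f t -> continuous (fun u => Rabs (f u)) t.
Proof. exact (continuous_Rabs_comp f t). Qed.

Lemma continuous_Rsqrt (f : R -> R) t : continuous f t -> continuous (fun u => sqrt (f u)) t.
Proof. exact (continuous_sqrt_comp f t). Qed.

#[local] Hint Resolve continuous_Rconst continuous_Rplus continuous_Rminus continuous_Rmult
  continuous_Ropp continuous_Rsqr continuous_Rexp continuous_Rabs continuous_Rsqrt : continuity.

Ltac solve_continuity := auto 20 with continuity.

Lemma ex_RInt_continuous_R (f : R -> R) a b : (forall t, continuous f t) -> ex_RInt f a b.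
Proof. intros Hf; apply (ex_RInt_continuous (V := R_CompleteNormedModule)); auto. Qed.

Lemma RInt_le_continuous (f g : R -> R) a b : a <= b ->
  (forall t, continuous f t) -> (forall t, continuous g t) ->
  (forall t, a < t < b -> f t <= g t) -> RInt f a b <= RInt g a b.
Proof. intros; apply RInt_le; auto using ex_RInt_continuous_R. Qed.

Lemma RInt_le_extend_nonneg (f : R -> R) a t b : a <= t <= b ->
  (forall u, continuous f u) -> (forall u, 0 <= f u) -> RInt f a t <= RInt f a b.
Proof.
  intros Ht Hc Hf.
  rewrite <- (RInt_Chasles f a t b) by apply ex_RInt_continuous_R, Hc.
  assert (0 <= RInt f t b) by (apply RInt_ge_0; auto using ex_RInt_continuous_R; lra).
  unfold plus; simpl; lra.
Qed.

Lemma RInt_scal_R (f : R -> R) k a b : (forall t, continuous f t) ->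
  RInt (fun t => k * f t) a b = k * RInt f a b.
Proof.
  intros Hf; apply (RInt_scal (V := R_CompleteNormedModule)), ex_RInt_continuous_R, Hf.
Qed.

Lemma Rabs_le_sqrt_sq_plus a b : 0 <= b -> Rabs a <= sqrt (a ^ 2 + b).
Proof.
  intros Hb; rewrite <- sqrt_Rsqr_abs; apply sqrt_le_1_alt; unfold Rsqr; nra.
Qed.

Lemma exp_mul_sq_ge0 a b : 0 <= exp a * b ^ 2.
Proof. apply Rmult_le_pos; [apply Rlt_le, exp_pos | apply pow2_ge_0]. Qed.

Lemma exp_le_exp x y : x <= y -> exp x <= exp y.
Proof. intros [H|H]; [apply Rlt_le, exp_increasing, H | subst; apply Rle_refl]. Qed.

Definition C1_curve (g : curve) : Prop := Defs.C1 (gx g) /\ Defs.C1 (gy g) /\ Defs.C1 (gz g).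

Lemma C1_continuous f : Defs.C1 f -> forall t, continuous f t.
Proof. intros [Hf _] t; apply (ex_derive_continuous (V := R_NormedModule)), Hf. Qed.

Lemma C1_id : Defs.C1 (fun t => t).
Proof.
  split; [intros; apply ex_derive_id|].
  intros t; apply (continuous_ext (fun _ => 1)); [intros; symmetry; apply Derive_id|].
  apply continuous_Rconst.
Qed.

Lemma C1_scal c f : Defs.C1 f -> Defs.C1 (fun t => c * f t).
Proof.
  intros [Hd Hc]; split; [intros; apply ex_derive_scal, Hd|].
  intros t; apply (continuous_ext (fun u => c * Derive f u)).
  - intros; symmetry; apply Derive_scal.
  - solve_continuity.
Qed.

Lemma C1_opp f : Defs.C1 f -> Defs.C1 (fun t => - f t).
Proof.
  intros [Hd Hc]; split; [intros; apply (ex_derive_opp (V := R_NormedModule)), Hd|].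
  intros t; apply (continuous_ext (fun u => - Derive f u)).
  - intros; symmetry; apply Derive_opp.
  - solve_continuity.
Qed.

Lemma admissible_C1 g p q : admissible g p q -> C1_curve g.
Proof. intros (Hx & Hy & Hz & _); exact (conj Hx (conj Hy Hz)). Qed.

Lemma admissible_originE g x y z :
  admissible g origin (x, y, z) <->
  C1_curve g /\ gx g 0 = 0 /\ gy g 0 = 0 /\ gz g 0 = 0 /\
  gx g 1 = x /\ gy g 1 = y /\ gz g 1 = z.
Proof.
  unfold admissible, C1_curve, origin; split.
  - intros (Hx & Hy & Hz & H0 & H1).
    injection H0 as ? ? ?; injection H1 as ? ? ?; tauto.
  - intros ((Hx & Hy & Hz) & H0x & H0y & H0z & H1x & H1y & H1z).
    rewrite H0x, H0y, H0z, H1x, H1y, H1z; tauto.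
Qed.

Definition speed (g : curve) (t : R) : R :=
  sqrt (exp (-2 * gz g t) * (Derive (gx g) t)^2
        + exp (2 * gz g t) * (Derive (gy g) t)^2 + (Derive (gz g) t)^2).

Lemma sol_lengthE g : sol_length g = RInt (speed g) 0 1.
Proof. reflexivity. Qed.

Lemma speed_continuous g : C1_curve g -> forall t, continuous (speed g) t.
Proof.
  intros (Hx & Hy & Hz) t.
  pose proof (C1_continuous _ Hz t); destruct Hx, Hy, Hz.
  unfold speed; solve_continuity.
Qed.

Lemma sol_length_ge0 g : C1_curve g -> 0 <= sol_length g.
Proof.
  intros Hg; rewrite sol_lengthE; apply RInt_ge_0; [lra | |intros; apply sqrt_pos].
  apply ex_RInt_continuous_R, speed_continuous, Hg.
Qed.

Definition segment (p : pt) : curve :=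
  mkCurve (fun t => px p * t) (fun t => py p * t) (fun t => pz p * t).

Lemma segment_admissible p : admissible (segment p) origin p.
Proof.
  destruct p as [[x y] z]; apply admissible_originE; split.
  - split; [|split]; apply C1_scal, C1_id.
  - cbn; repeat split; ring.
Qed.

Definition lengths_from_origin (p : pt) (l : R) : Prop :=
  exists g, admissible g origin p /\ l = sol_length g.

Lemma sol_dist_glb p : is_glb_Rbar (lengths_from_origin p) (sol_dist origin p).
Proof. apply Glb_Rbar_correct. Qed.

Definition dist0 (p : pt) : R := real (sol_dist origin p).

Lemma sol_dist_origin_ge0 p : Rbar_le 0 (sol_dist origin p).
Proof.
  apply (proj2 (sol_dist_glb p)); intros l (g & Hg & ->).
  apply sol_length_ge0, (admissible_C1 g origin p Hg).
Qed.

Lemma sol_dist_origin_finite p : sol_dist origin p = Finite (dist0 p).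
Proof.
  unfold dist0; pose proof (sol_dist_origin_ge0 p) as H0.
  assert (H1 : Rbar_le (sol_dist origin p) (sol_length (segment p))).
  { apply (proj1 (sol_dist_glb p)); exists (segment p).
    split; [apply segment_admissible | reflexivity]. }
  destruct (sol_dist origin p); simpl in *; easy.
Qed.

Lemma sphere_iff r p : sphere r p <-> dist0 p = r.
Proof.
  unfold sphere; rewrite sol_dist_origin_finite; split; [intros H; injection H | intros ->]; auto.
Qed.

Lemma dist0_le_length g p : admissible g origin p -> dist0 p <= sol_length g.
Proof.
  intros Hg; destruct (sol_dist_glb p) as [Hlb _].
  specialize (Hlb (sol_length g) (ex_intro _ g (conj Hg eq_refl))).
  rewrite sol_dist_origin_finite in Hlb; exact Hlb.
Qed.

Lemma dist0_ge0 p : 0 <= dist0 p.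
Proof. pose proof (sol_dist_origin_ge0 p) as H; rewrite sol_dist_origin_finite in H; exact H. Qed.

Lemma dist0_approx p eps : 0 < eps ->
  exists g, admissible g origin p /\ sol_length g < dist0 p + eps.
Proof.
  intros Heps; apply NNPP; intros Hnone.
  destruct (sol_dist_glb p) as [_ Hglb].
  assert (H : Rbar_le (dist0 p + eps) (sol_dist origin p)).
  { apply Hglb; intros l (g & Hg & ->); simpl.
    apply Rnot_lt_le; intros Hlt; apply Hnone; exists g; auto. }
  rewrite sol_dist_origin_finite in H; simpl in H; lra.
Qed.

(* Only near-minimizing curves need to be transformed, so the bound may use [L <= dist0 p + 1]. *)
Lemma dist0_le_of_curve_transform p q k c : 0 <= k ->
  (forall g, admissible g origin p -> sol_length g <= dist0 p + 1 ->
     exists g', admissible g' origin q /\ sol_length g' <= k * sol_length g - c) ->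
  dist0 q <= k * dist0 p - c.
Proof.
  intros Hk Htr; apply Rle_plus_epsilon; intros eps Heps.
  set (d := Rmin 1 (eps / (k + 1))).
  assert (Hd0 : 0 < d) by (apply Rmin_glb_lt; [lra | apply Rdiv_lt_0_compat; lra]).
  assert (Hd1 : d <= 1) by apply Rmin_l.
  assert (Hdeps : k * d <= eps).
  { assert (Hd : d <= eps / (k + 1)) by apply Rmin_r.
    apply (Rmult_le_compat_l (k + 1)) in Hd; [|lra].
    replace ((k + 1) * (eps / (k + 1))) with eps in Hd by (field; lra); lra. }
  destruct (dist0_approx p d Hd0) as (g & Hg & Hlen).
  destruct (Htr g Hg) as (g' & Hg' & Hlen'); [lra|].
  pose proof (dist0_le_length g' q Hg').
  assert (k * sol_length g <= k * (dist0 p + d)) by (apply Rmult_le_compat_l; lra).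
  lra.
Qed.

(** * Lower bounds along a curve *)

Definition x_speed (g : curve) (t : R) : R := Rabs (exp (- gz g t) * Derive (gx g) t).

Definition yz_speed_sq (g : curve) (t : R) : R :=
  exp (2 * gz g t) * (Derive (gy g) t)^2 + (Derive (gz g) t)^2.

Lemma yz_speed_sq_ge0 g t : 0 <= yz_speed_sq g t.
Proof.
  unfold yz_speed_sq; pose proof (exp_mul_sq_ge0 (2 * gz g t) (Derive (gy g) t)).
  pose proof (pow2_ge_0 (Derive (gz g) t)); lra.
Qed.

Lemma speedE g t : speed g t = sqrt ((exp (- gz g t) * Derive (gx g) t)^2 + yz_speed_sq g t).
Proof.
  unfold speed, yz_speed_sq; f_equal.
  replace (-2 * gz g t) with (- gz g t + - gz g t) by ring; rewrite exp_plus; ring.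
Qed.

Lemma x_speed_le_speed g t : x_speed g t <= speed g t.
Proof. rewrite speedE; apply Rabs_le_sqrt_sq_plus, yz_speed_sq_ge0. Qed.

Lemma x_speed_continuous g : C1_curve g -> forall t, continuous (x_speed g) t.
Proof.
  intros ((_ & Hx) & _ & Hz) t; pose proof (C1_continuous _ Hz t).
  unfold x_speed; solve_continuity.
Qed.

Lemma RInt_x_speed_le_length g : C1_curve g -> RInt (x_speed g) 0 1 <= sol_length g.
Proof.
  intros Hg; apply RInt_le_continuous; [lra | apply x_speed_continuous, Hg |
    apply speed_continuous, Hg | intros; apply x_speed_le_speed].
Qed.

Section AdmissibleCurve.

Variables (g : curve) (x y z : R).
Hypothesis Hg : admissible g origin (x, y, z).

Lemma abs_gz_le_length t : 0 <= t <= 1 -> Rabs (gz g t) <= sol_length g.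
Proof.
  intros Ht; apply admissible_originE in Hg as (HC & _ & _ & Hz0 & _).
  pose proof HC as (_ & _ & [Hz Hz']).
  assert (E : gz g t = RInt (Derive (gz g)) 0 t) by (rewrite RInt_Derive by auto; lra).
  rewrite E.
  apply Rle_trans with (RInt (fun u => Rabs (Derive (gz g) u)) 0 t);
    [apply abs_RInt_le; auto using ex_RInt_continuous_R; lra|].
  apply Rle_trans with (RInt (fun u => Rabs (Derive (gz g) u)) 0 1).
  - apply RInt_le_extend_nonneg; auto using Rabs_pos; solve_continuity.
  - rewrite sol_lengthE.
    apply RInt_le_continuous; auto using speed_continuous; [lra | solve_continuity |].
    intros u _; unfold speed.
    rewrite Rplus_comm; apply Rabs_le_sqrt_sq_plus.
    pose proof (exp_mul_sq_ge0 (-2 * gz g u) (Derive (gx g) u)).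
    pose proof (exp_mul_sq_ge0 (2 * gz g u) (Derive (gy g) u)); lra.
Qed.

Lemma RInt_x_speed_ge : exp (- sol_length g) * Rabs x <= RInt (x_speed g) 0 1.
Proof.
  pose proof Hg as Hg'; apply admissible_originE in Hg' as (HC & Hx0 & _ & _ & Hx1 & _).
  pose proof HC as ([Hx Hx'] & _ & _).
  assert (E : x = RInt (Derive (gx g)) 0 1) by (rewrite RInt_Derive by auto; lra).
  rewrite E.
  apply Rle_trans with (exp (- sol_length g) * RInt (fun u => Rabs (Derive (gx g) u)) 0 1).
  - apply Rmult_le_compat_l; [apply Rlt_le, exp_pos|].
    apply abs_RInt_le; auto using ex_RInt_continuous_R; lra.
  - rewrite <- RInt_scal_R by solve_continuity.
    apply RInt_le_continuous; auto using x_speed_continuous; [lra|solve_continuity|].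
    intros u Hu; unfold x_speed; rewrite Rabs_mult, (Rabs_pos_eq (exp _)) by apply Rlt_le, exp_pos.
    apply Rmult_le_compat_r; [apply Rabs_pos|]; apply exp_le_exp.
    pose proof (abs_gz_le_length u ltac:(lra)) as Hz; apply Rabs_le_between in Hz; lra.
Qed.

Lemma length_ge_exp_x : exp (- sol_length g) * Rabs x <= sol_length g.
Proof.
  eapply Rle_trans; [apply RInt_x_speed_ge | apply RInt_x_speed_le_length].
  apply (admissible_C1 g origin (x, y, z) Hg).
Qed.

End AdmissibleCurve.

(** * Scaling the x-coordinate *)

Lemma sqrt_scale_le a b c : 0 <= b ->
  sqrt (c ^ 2 * a ^ 2 + b) <= Rmax 1 (Rabs c) * sqrt (a ^ 2 + b).
Proof.
  intros Hb; set (m := Rmax 1 (Rabs c)).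
  assert (Hm1 : 1 <= m) by apply Rmax_l.
  assert (Hcm : Rabs c <= m) by apply Rmax_r.
  assert (Hmc : c ^ 2 <= m ^ 2) by (rewrite <- (pow2_abs c); pose proof (Rabs_pos c); nra).
  assert (Ha : 0 <= a ^ 2) by apply pow2_ge_0.
  rewrite <- (sqrt_pow2 m), <- sqrt_mult by nra.
  apply sqrt_le_1_alt.
  assert (c ^ 2 * a ^ 2 <= m ^ 2 * a ^ 2) by (apply Rmult_le_compat_r; lra).
  assert (b <= m ^ 2 * b)
    by (rewrite <- (Rmult_1_l b) at 1; apply Rmult_le_compat_r; [lra | simpl; nra]).
  lra.
Qed.

(* With [s = sqrt (a^2 + b)]: [s - s' = (1 - c^2) a^2 / (s + s') >= (1 - c^2) a^2 / (2 s)], and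
   [a^2 / s >= 2 lam |a| - lam^2 s] since [(|a| - lam s)^2 >= 0]. *)
Lemma sqrt_shrink_le a b c lam : 0 <= b -> c ^ 2 <= 1 ->
  sqrt (c ^ 2 * a ^ 2 + b)
  <= sqrt (a ^ 2 + b) - (1 - c ^ 2) / 2 * (2 * lam * Rabs a - lam ^ 2 * sqrt (a ^ 2 + b)).
Proof.
  intros Hb Hc.
  set (s := sqrt (a ^ 2 + b)); set (s' := sqrt (c ^ 2 * a ^ 2 + b)).
  assert (Hs : s * s = a ^ 2 + b) by (apply sqrt_sqrt; nra).
  assert (Hs' : s' * s' = c ^ 2 * a ^ 2 + b) by (apply sqrt_sqrt; nra).
  assert (Hs0 : 0 <= s) by apply sqrt_pos.
  assert (Hs'0 : 0 <= s') by apply sqrt_pos.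
  assert (Ha : Rabs a ^ 2 = a ^ 2) by apply pow2_abs.
  assert (Hle : s' <= s) by nra.
  assert (Hdiff : (1 - c ^ 2) * a ^ 2 <= 2 * s * (s - s')) by nra.
  assert (Hsq : s * (2 * lam * Rabs a - lam ^ 2 * s) <= a ^ 2)
    by (pose proof (pow2_ge_0 (Rabs a - lam * s)); nra).
  destruct (Req_dec s 0) as [E|E].
  - assert (Ha0 : Rabs a = 0) by nra; assert (Es' : s' = 0) by nra.
    rewrite E, Ha0, Es'; lra.
  - apply (Rmult_le_reg_l (2 * s)); [lra|]. nra.
Qed.

Definition scale_x (c : R) (g : curve) : curve := mkCurve (fun t => c * gx g t) (gy g) (gz g).

Lemma scale_x_C1 c g : C1_curve g -> C1_curve (scale_x c g).
Proof. intros (Hx & Hy & Hz); exact (conj (C1_scal c _ Hx) (conj Hy Hz)). Qed.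

Lemma scale_x_admissible c g x y z :
  admissible g origin (x, y, z) -> admissible (scale_x c g) origin (c * x, y, z).
Proof.
  rewrite !admissible_originE; intros (HC & Hx0 & Hy0 & Hz0 & Hx1 & Hy1 & Hz1).
  split; [apply scale_x_C1, HC|].
  simpl; rewrite Hx0, Hx1; repeat split; auto; ring.
Qed.

Lemma speed_scale_x c g t :
  speed (scale_x c g) t = sqrt (c ^ 2 * (exp (- gz g t) * Derive (gx g) t)^2 + yz_speed_sq g t).
Proof.
  unfold speed, yz_speed_sq; simpl; rewrite Derive_scal; f_equal.
  replace (-2 * gz g t) with (- gz g t + - gz g t) by ring; rewrite exp_plus; ring.
Qed.

Lemma length_scale_x_le c g : C1_curve g ->
  sol_length (scale_x c g) <= Rmax 1 (Rabs c) * sol_length g.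
Proof.
  intros Hg; pose proof (speed_continuous g Hg) as Hsp.
  pose proof (speed_continuous _ (scale_x_C1 c g Hg)).
  rewrite !sol_lengthE, <- RInt_scal_R by exact Hsp.
  apply RInt_le_continuous; [lra | auto | solve_continuity |].
  intros t _; rewrite speed_scale_x, speedE; apply sqrt_scale_le, yz_speed_sq_ge0.
Qed.

Lemma RInt_lincomb (f h : R -> R) al be a b :
  (forall t, continuous f t) -> (forall t, continuous h t) ->
  RInt (fun t => al * f t - be * h t) a b = al * RInt f a b - be * RInt h a b.
Proof.
  intros Hf Hh.
  rewrite <- (RInt_scal_R f al), <- (RInt_scal_R h be) by assumption.
  apply (RInt_minus (V := R_CompleteNormedModule) (fun t => al * f t) (fun t => be * h t));
    apply ex_RInt_continuous_R; solve_continuity.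
Qed.

Lemma length_scale_x_shrink c lam g : C1_curve g -> c ^ 2 <= 1 ->
  sol_length (scale_x c g)
  <= sol_length g - (1 - c ^ 2) / 2 * (2 * lam * RInt (x_speed g) 0 1 - lam ^ 2 * sol_length g).
Proof.
  intros Hg Hc; set (k := (1 - c ^ 2) / 2).
  pose proof (speed_continuous g Hg); pose proof (speed_continuous _ (scale_x_C1 c g Hg)).
  pose proof (x_speed_continuous g Hg).
  assert (E : sol_length g - k * (2 * lam * RInt (x_speed g) 0 1 - lam ^ 2 * sol_length g)
             = RInt (fun t => (1 + k * lam ^ 2) * speed g t - (2 * k * lam) * x_speed g t) 0 1)
    by (rewrite RInt_lincomb, sol_lengthE by assumption; ring).
  rewrite E, sol_lengthE; apply RInt_le_continuous; [lra | auto | solve_continuity |].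
  intros t _; rewrite speed_scale_x, speedE; unfold x_speed.
  pose proof (sqrt_shrink_le (exp (- gz g t) * Derive (gx g) t) (yz_speed_sq g t) c lam
                (yz_speed_sq_ge0 g t) Hc).
  unfold k; lra.
Qed.

Lemma dist0_scale_x c x y z : dist0 (c * x, y, z) <= Rmax 1 (Rabs c) * dist0 (x, y, z).
Proof.
  rewrite <- (Rminus_0_r (_ * dist0 _)).
  apply dist0_le_of_curve_transform; [pose proof (Rmax_l 1 (Rabs c)); lra|].
  intros g Hg _; exists (scale_x c g); split; [apply scale_x_admissible, Hg|].
  rewrite Rminus_0_r; apply length_scale_x_le, (admissible_C1 g origin (x, y, z) Hg).
Qed.

(* With [A = ∫ e^(-z)|x'| >= m] and [L <= B] for near-minimizers, the choice [lam = m / B]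
   makes the gain [2 lam A - lam^2 L] of [length_scale_x_shrink] at least [m^2 / B]. *)
Lemma dist0_scale_x_lt c x y z : c ^ 2 < 1 -> x <> 0 -> dist0 (c * x, y, z) < dist0 (x, y, z).
Proof.
  intros Hc Hx.
  set (B := dist0 (x, y, z) + 1); set (m := exp (- B) * Rabs x); set (k := (1 - c ^ 2) / 2).
  assert (HB : 1 <= B) by (unfold B; pose proof (dist0_ge0 (x, y, z)); lra).
  assert (Hm : 0 < m) by (apply Rmult_lt_0_compat; [apply exp_pos | apply Rabs_pos_lt, Hx]).
  assert (Hk : 0 < k) by (unfold k; lra).
  assert (Hgain : 0 < k * (m * m / B))
    by (apply Rmult_lt_0_compat, Rdiv_lt_0_compat; nra).
  enough (dist0 (c * x, y, z) <= 1 * dist0 (x, y, z) - k * (m * m / B)) by lra.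
  apply dist0_le_of_curve_transform; [lra|].
  intros g Hg HL; exists (scale_x c g); split; [apply scale_x_admissible, Hg|].
  set (lam := m / B); set (A := RInt (x_speed g) 0 1).
  assert (HA : m <= A).
  { apply Rle_trans with (exp (- sol_length g) * Rabs x); [|apply (RInt_x_speed_ge g x y z Hg)].
    apply Rmult_le_compat_r; [apply Rabs_pos | apply exp_le_exp; unfold B; lra]. }
  assert (Hlam : 0 <= lam) by (apply Rlt_le, Rdiv_lt_0_compat; lra).
  assert (lam * m <= lam * A) by (apply Rmult_le_compat_l; lra).
  assert (lam ^ 2 * sol_length g <= lam ^ 2 * B)
    by (apply Rmult_le_compat_l; [nra | unfold B; lra]).
  assert (Em : 2 * lam * m - lam ^ 2 * B = m * m / B) by (unfold lam; field; lra).
  assert (k * (m * m / B) <= k * (2 * lam * A - lam ^ 2 * sol_length g))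
    by (apply Rmult_le_compat_l; lra).
  pose proof (length_scale_x_shrink c lam g (admissible_C1 g origin (x, y, z) Hg) ltac:(lra))
    as Hshrink.
  fold k A in Hshrink; lra.
Qed.

Lemma dist0_opp_x x y z : dist0 (- x, y, z) = dist0 (x, y, z).
Proof.
  assert (Hneg : forall u, dist0 (- u, y, z) <= dist0 (u, y, z)).
  { intros u; pose proof (dist0_scale_x (-1) u y z) as H.
    rewrite Rabs_m1, Rmax_left, Rmult_1_l in H by lra.
    replace (-1 * u) with (- u) in H by ring; exact H. }
  apply Rle_antisym; [apply Hneg|].
  rewrite <- (Ropp_involutive x) at 1; apply Hneg.
Qed.

Lemma dist0_lt_abs_x x1 x2 y z : Rabs x1 < Rabs x2 -> dist0 (x1, y, z) < dist0 (x2, y, z).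
Proof.
  intros H.
  assert (Hx2 : x2 <> 0) by (intros ->; rewrite Rabs_R0 in H; pose proof (Rabs_pos x1); lra).
  assert (Hx2' : 0 < Rabs x2) by (apply Rabs_pos_lt, Hx2).
  replace x1 with (x1 / x2 * x2) by (field; exact Hx2).
  apply dist0_scale_x_lt; [|exact Hx2].
  rewrite <- pow2_abs, Rabs_div by exact Hx2.
  assert (Rabs x1 / Rabs x2 < 1) by exact (proj1 (Rdiv_lt_1 _ _ Hx2') H).
  assert (0 <= Rabs x1 / Rabs x2) by (apply Rdiv_le_0_compat; [apply Rabs_pos | exact Hx2']).
  nra.
Qed.

Lemma dist0_eq_abs_x x1 x2 y z :
  dist0 (x1, y, z) = dist0 (x2, y, z) -> Rabs x1 = Rabs x2.
Proof.
  intros E; destruct (Rtotal_order (Rabs x1) (Rabs x2)) as [H|[H|H]]; auto;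
    apply (dist0_lt_abs_x _ _ y z) in H; lra.
Qed.

Lemma dist0_le_abs_x x1 x2 y z : Rabs x1 <= Rabs x2 -> dist0 (x1, y, z) <= dist0 (x2, y, z).
Proof.
  intros [H|H]; [apply Rlt_le, dist0_lt_abs_x, H|].
  destruct (Rsqr_eq _ _ (Rsqr_eq_asb_1 _ _ H)) as [-> | ->]; [|rewrite dist0_opp_x]; apply Rle_refl.
Qed.

(** * The isometry (x, y, z) |-> (y, x, -z) *)

Definition swap_xy (g : curve) : curve := mkCurve (gy g) (gx g) (fun t => - gz g t).

Lemma swap_xy_admissible g x y z :
  admissible g origin (x, y, z) -> admissible (swap_xy g) origin (y, x, - z).
Proof.
  rewrite !admissible_originE; intros ((Hx & Hy & Hz) & Hx0 & Hy0 & Hz0 & Hx1 & Hy1 & Hz1).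
  split; [exact (conj Hy (conj Hx (C1_opp _ Hz)))|].
  simpl; rewrite Hz0, Hz1; repeat split; auto; ring.
Qed.

Lemma sol_length_swap_xy g : sol_length (swap_xy g) = sol_length g.
Proof.
  rewrite !sol_lengthE; apply RInt_ext; intros t _; unfold speed; simpl.
  rewrite Derive_opp; f_equal.
  replace (-2 * - gz g t) with (2 * gz g t) by ring.
  replace (2 * - gz g t) with (-2 * gz g t) by ring; ring.
Qed.

Lemma dist0_swap_xy x y z : dist0 (y, x, - z) = dist0 (x, y, z).
Proof.
  assert (Hle : forall x y z, dist0 (y, x, - z) <= dist0 (x, y, z)).
  { clear; intros x y z; rewrite <- (Rmult_1_l (dist0 (x, y, z))), <- (Rminus_0_r (1 * _)).
    apply dist0_le_of_curve_transform; [lra|].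
    intros g Hg _; exists (swap_xy g); split; [apply swap_xy_admissible, Hg|].
    rewrite sol_length_swap_xy; lra. }
  apply Rle_antisym; [apply Hle|].
  rewrite <- (Ropp_involutive z) at 1; apply Hle.
Qed.

Lemma dist0_eq_abs_y x y1 y2 z :
  dist0 (x, y1, z) = dist0 (x, y2, z) -> Rabs y1 = Rabs y2.
Proof.
  rewrite <- (dist0_swap_xy x y1 z), <- (dist0_swap_xy x y2 z); apply dist0_eq_abs_x.
Qed.

(** * Points of the x-axis *)

Lemma dist0_axis_le s : dist0 (s, 0, 0) <= Rabs s.
Proof.
  eapply Rle_trans; [apply dist0_le_length, (segment_admissible (s, 0, 0))|].
  rewrite sol_lengthE, (RInt_ext _ (fun _ => Rabs s)).
  - rewrite RInt_const; unfold scal; simpl; unfold mult; simpl; lra.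
  - intros t _; unfold speed; cbn [segment gx gy gz px py pz fst snd].
    rewrite !Derive_scal, Derive_id, Rmult_0_l, !Rmult_0_r, exp_0, <- sqrt_Rsqr_abs.
    f_equal; unfold Rsqr; ring.
Qed.

Lemma dist0_axis_ge a : 0 <= a -> a <= dist0 (a * exp a, 0, 0).
Proof.
  intros Ha; apply Rnot_lt_le; intros Hlt.
  destruct (dist0_approx (a * exp a, 0, 0) (a - dist0 (a * exp a, 0, 0)))
    as (g & Hg & HL); [lra|].
  pose proof (length_ge_exp_x g _ _ _ Hg) as H.
  rewrite Rabs_pos_eq in H by (apply Rmult_le_pos; [lra | apply Rlt_le, exp_pos]).
  replace (exp (- sol_length g) * (a * exp a)) with (a * exp (a - sol_length g)) in H
    by (unfold Rminus; rewrite exp_plus; ring).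
  assert (1 <= exp (a - sol_length g)) by (rewrite <- exp_0; apply exp_le_exp; lra).
  nra.
Qed.

Lemma continuity_pt_of_local_lipschitz (f : R -> R) s K d : 0 < d ->
  (forall u, Rabs (u - s) < d -> Rabs (f u - f s) <= K * Rabs (u - s)) ->
  continuity_pt f s.
Proof.
  intros Hd Hf; apply continuity_pt_locally; intros eps.
  pose proof (Rabs_pos K); pose proof (cond_pos eps).
  assert (Hdelta : 0 < Rmin d (eps / (Rabs K + 1)))
    by (apply Rmin_glb_lt; [|apply Rdiv_lt_0_compat]; lra).
  exists (mkposreal _ Hdelta); intros u Hu.
  change (Rabs (u - s) < Rmin d (eps / (Rabs K + 1))) in Hu.
  assert (Hu1 : Rabs (u - s) < d) by (eapply Rlt_le_trans; [exact Hu | apply Rmin_l]).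
  assert (Hu2 : Rabs (u - s) < eps / (Rabs K + 1))
    by (eapply Rlt_le_trans; [exact Hu | apply Rmin_r]).
  apply Rle_lt_trans with (K * Rabs (u - s)); [apply Hf, Hu1|].
  pose proof (Rle_abs K); pose proof (Rabs_pos (u - s)).
  apply (Rmult_lt_compat_l (Rabs K + 1)) in Hu2; [|lra].
  replace ((Rabs K + 1) * (eps / (Rabs K + 1))) with (pos eps) in Hu2 by (field; lra).
  nra.
Qed.

(* Monotonicity in [|x|] and [dist0 (t x) <= t dist0 x] for [t >= 1] pin [dist0 (u, 0, 0)]
   between [dist0 (s, 0, 0)] and [u / s * dist0 (s, 0, 0)]. *)
Lemma dist0_axis_local_lipschitz s u : 0 < s -> 0 < u ->
  Rabs (dist0 (u, 0, 0) - dist0 (s, 0, 0)) <= dist0 (s, 0, 0) / s * Rabs (u - s).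
Proof.
  intros Hs Hu; pose proof (dist0_ge0 (s, 0, 0)) as Hds.
  destruct (Rle_or_lt s u) as [Hsu|Hus].
  - assert (Hmono : dist0 (s, 0, 0) <= dist0 (u, 0, 0))
      by (apply dist0_le_abs_x; rewrite !Rabs_pos_eq; lra).
    pose proof (dist0_scale_x (u / s) s 0 0) as Hscale.
    replace (u / s * s) with u in Hscale by (field; lra).
    assert (Ht : 1 <= u / s) by (apply Rle_div_r; lra).
    rewrite Rabs_pos_eq, Rmax_right in Hscale by lra.
    rewrite !Rabs_pos_eq by lra.
    replace (dist0 (s, 0, 0) / s * (u - s)) with (u / s * dist0 (s, 0, 0) - dist0 (s, 0, 0))
      by (field; lra); lra.
  - assert (Hmono : dist0 (u, 0, 0) <= dist0 (s, 0, 0))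
      by (apply dist0_le_abs_x; rewrite !Rabs_pos_eq; lra).
    pose proof (dist0_scale_x (s / u) u 0 0) as Hscale.
    replace (s / u * u) with s in Hscale by (field; lra).
    assert (Ht : 1 <= s / u) by (apply Rle_div_r; lra).
    rewrite Rabs_pos_eq, Rmax_right in Hscale by lra.
    rewrite Rabs_left1, Rabs_left1 by lra.
    assert (Hlow : u / s * dist0 (s, 0, 0) <= dist0 (u, 0, 0)).
    { apply (Rmult_le_reg_l (s / u)); [apply Rdiv_lt_0_compat; lra|].
      replace (s / u * (u / s * dist0 (s, 0, 0))) with (dist0 (s, 0, 0)) by (field; lra).
      exact Hscale. }
    replace (dist0 (s, 0, 0) / s * - (u - s)) with (dist0 (s, 0, 0) - u / s * dist0 (s, 0, 0))
      by (field; lra); lra.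
Qed.

Lemma dist0_axis_continuous s : 0 < s -> continuity_pt (fun u => dist0 (u, 0, 0)) s.
Proof.
  intros Hs; apply (continuity_pt_of_local_lipschitz _ s (dist0 (s, 0, 0) / s) s Hs).
  intros u Hu; apply dist0_axis_local_lipschitz; [exact Hs|].
  apply Rabs_def2 in Hu; lra.
Qed.

Lemma exists_axis_point_at_dist r : 0 < r -> exists s, 0 < s /\ dist0 (s, 0, 0) = r.
Proof.
  intros Hr; set (X := (r + 1) * exp (r + 1)).
  assert (HX : r + 1 <= X) by (pose proof (exp_ineq1 (r + 1) ltac:(lra)); unfold X; nra).
  destruct (IVT_interv (fun u => dist0 (u, 0, 0) - r) (r / 2) X) as (s & Hs & Hds).
  - intros a Ha; apply continuity_pt_minus;
      [apply dist0_axis_continuous; lra | apply continuity_pt_const; intros ? ?; reflexivity].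
  - lra.
  - pose proof (dist0_axis_le (r / 2)) as Hlow; rewrite Rabs_pos_eq in Hlow by lra; lra.
  - pose proof (dist0_axis_ge (r + 1) ltac:(lra)) as Hhigh; fold X in Hhigh; lra.
  - exists s; split; lra.
Qed.

Lemma NoDup_same_abs_length_le_2 (l : list R) a :
  NoDup l -> (forall u, In u l -> Rabs u = a) -> (length l <= 2)%nat.
Proof.
  intros Hnd Ha; destruct l as [|u [|v [|w l]]]; simpl; [lia | lia | lia|].
  exfalso; inversion Hnd as [|? ? Hu Hnd']; inversion Hnd' as [|? ? Hv _]; subst.
  assert (Huv : Rabs u = Rabs v) by (rewrite (Ha u), (Ha v); simpl; auto).
  assert (Huw : Rabs u = Rabs w) by (rewrite (Ha u), (Ha w); simpl; auto).
  destruct (Rsqr_eq _ _ (Rsqr_eq_asb_1 _ _ Huv)) as [->|Ev]; [apply Hu; simpl; auto|].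
  destruct (Rsqr_eq _ _ (Rsqr_eq_asb_1 _ _ Huw)) as [->|Ew]; [apply Hu; simpl; auto|].
  apply Hv; left; lra.
Qed.

Lemma at_most_2_to_1_of_abs (f : pt -> pt) (c : pt -> R) (S : pt -> Prop) :
  (forall p p', f p = f p' -> c p = c p' -> p = p') ->
  (forall p p', S p -> S p' -> f p = f p' -> Rabs (c p) = Rabs (c p')) ->
  at_most_N_to_1 f S 2.
Proof.
  intros Hinj Habs q l Hnd Hl; destruct l as [|p0 l']; [simpl; lia|].
  destruct (Hl p0 (or_introl eq_refl)) as [HS0 Hf0].
  rewrite <- (length_map c); apply (NoDup_same_abs_length_le_2 _ (Rabs (c p0))).
  - apply NoDup_map_NoDup_ForallPairs; [|exact Hnd].
    intros p p' Hp Hp' E; apply Hinj; [|exact E].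
    destruct (Hl p Hp), (Hl p' Hp'); congruence.
  - intros u Hu; apply in_map_iff in Hu as (p & <- & Hp).
    destruct (Hl p Hp); apply Habs; auto; congruence.
Qed.

Lemma two_le_of_two_points (f : pt -> pt) (S : pt -> Prop) p1 p2 M :
  p1 <> p2 -> S p1 -> S p2 -> f p1 = f p2 -> at_most_N_to_1 f S M -> (2 <= M)%nat.
Proof.
  intros Hne H1 H2 Hf HM; apply (HM (f p1) (p1 :: p2 :: nil)).
  - constructor; [simpl; intros [E|[]]; auto|].
    constructor; [intros []|constructor].
  - intros p [<-|[<-|[]]]; auto.
Qed.

Lemma is_N_etaX r : 0 < r -> is_N etaX r 2.
Proof.
  intros Hr; split.
  - apply (at_most_2_to_1_of_abs etaX px).
    + intros [[x y] z] [[x' y'] z'] E Ex; injection E as Ey Ez; cbn in *; subst; reflexivity.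
    + intros [[x y] z] [[x' y'] z'] Hs Hs' E; injection E as E1 E2; cbn in E1, E2; subst.
      rewrite sphere_iff in Hs, Hs'; cbn; apply (dist0_eq_abs_x _ _ y' z'); congruence.
  - intros M HM; destruct (exists_axis_point_at_dist r Hr) as (s & Hs & Hd).
    apply (two_le_of_two_points etaX (sphere r) (s, 0, 0) (- s, 0, 0)); auto.
    + intros E; injection E; lra.
    + apply sphere_iff, Hd.
    + apply sphere_iff; rewrite dist0_opp_x; exact Hd.
Qed.

Lemma is_N_etaY r : 0 < r -> is_N etaY r 2.
Proof.
  intros Hr; split.
  - apply (at_most_2_to_1_of_abs etaY py).
    + intros [[x y] z] [[x' y'] z'] E Ey; injection E as Ex Ez; cbn in *; subst; reflexivity.
    + intros [[x y] z] [[x' y'] z'] Hs Hs' E; injection E as E1 E2; cbn in E1, E2; subst.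
      rewrite sphere_iff in Hs, Hs'; cbn; apply (dist0_eq_abs_y x' _ _ z'); congruence.
  - intros M HM; destruct (exists_axis_point_at_dist r Hr) as (s & Hs & Hd).
    apply (two_le_of_two_points etaY (sphere r) (0, s, 0) (0, - s, 0)); auto.
    + intros E; injection E; lra.
    + apply sphere_iff; rewrite <- Ropp_0 at 2; rewrite dist0_swap_xy; exact Hd.
    + apply sphere_iff; rewrite <- Ropp_0 at 2; rewrite dist0_swap_xy, dist0_opp_x; exact Hd.
Qed.

Theorem mainTheorem3 : forall r : R, 0 < r -> is_N etaX r 2 /\ is_N etaY r 2.
Proof. intros r Hr; split; [apply is_N_etaX | apply is_N_etaY]; exact Hr. Qed.
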